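(* Let $\mathcal{Z}=\{(\boldsymbol{z}_i,y_i)\}_{i=1}^{n}$ be labeled representations with $\|\boldsymbol{z}_i\|_2=1$ and labels $y_i\in\{1,\dots,N_C\}$; let $\mathcal{C}_k=\{i: y_i=k\}$ be the set of support samples of class $k$. For each class $k$ let $\boldsymbol{c}_k$ be a prototype representation with $\|\boldsymbol{c}_k\|_2=1$, and for each sample $i$ write $\boldsymbol{c}_i$ for the (expanded) prototype of its class, i.e. the $n$ prototype representations $\{\boldsymbol{c}_i\}_{i=1}^n$ satisfy $\boldsymbol{c}_i=\boldsymbol{c}_{y_i}$. Define \[ \mathcal{L}_{\rm SCE}=-\frac{1}{n}\sum_{i=1}^{n}\log\frac{\exp(\boldsymbol{z}_i^{\top}\boldsymbol{c}_i)}{\sum_{j=1}^{n}\exp(\boldsymbol{z}_i^{\top}\boldsymbol{c}_j)}-\frac{1}{n}\sum_{i=1}^{n}\log\frac{\exp(\boldsymbol{c}_i^{\top}\boldsymbol{z}_i)}{\sum_{j=1}^{n}\exp(\boldsymbol{c}_i^{\top}\boldsymbol{z}_j)}. \] Then \[ \mathcal{L}_{\rm SCE}\ \ge\ -\frac{2}{n}\sum_{i=1}^{n}\boldsymbol{z}_i^{\top}\boldsymbol{c}_i+\frac{2}{n}\sum_{i=1}^{n}\sum_{k=1}^{N_C}\frac{|\mathcal{C}_k|}{n}\boldsymbol{z}_i^{\top}\boldsymbol{c}_k. \]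
   Context: In this setting (contrastive prototype–image adaptation), the prototype embeddings are expanded to one row per support sample via $YY^{\top}$ applied to the embeddings, where $Y$ is the one-hot label matrix, so the $i$-th prototype representation is the prototype representation of the class of sample $i$; there are thus $|\mathcal{C}_k|$ identical copies of $\boldsymbol{c}_k$ among $\boldsymbol{c}_1,\dots,\boldsymbol{c}_n$. *)

From mathcomp Require Import all_boot all_order all_algebra.
From mathcomp Require Import all_classical all_reals all_analysis.
Set Implicit Arguments. Unset Strict Implicit. Unset Printing Implicit Defensive.
Import Order.TTheory GRing.Theory Num.Theory.
Local Open Scope ring_scope.

Definition dotv (R : realType) (d : nat) (u v : 'rV[R]_d) : R :=
  \sum_(l < d) u 0 l * v 0 l.

Definition sqnorm (R : realType) (d : nat) (u : 'rV[R]_d) : R := dotv u u.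

Definition class_card (n NC : nat) (y : 'I_n -> 'I_NC) (k : 'I_NC) : nat :=
  #|[set i : 'I_n | y i == k]|.

(* symmetric cross-entropy loss; z i = sample embeddings, cexp i = c_{y_i} *)
Definition L_SCE (R : realType) (d n : nat) (z cexp : 'I_n -> 'rV[R]_d) : R :=
  - (n%:R)^-1 * \sum_(i < n)
      ln (expR (dotv (z i) (cexp i)) / \sum_(j < n) expR (dotv (z i) (cexp j)))
  - (n%:R)^-1 * \sum_(i < n)
      ln (expR (dotv (cexp i) (z i)) / \sum_(j < n) expR (dotv (cexp i) (z j))).

From mathcomp Require Import all_boot all_order all_algebra.
From mathcomp Require Import all_classical all_reals all_analysis.
From mathcomp Require Import lra.
Set Implicit Arguments. Unset Strict Implicit. Unset Printing Implicit Defensive.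
Import Order.TTheory GRing.Theory Num.Theory.
Local Open Scope ring_scope.

(* Each of the two terms of L_SCE is an InfoNCE loss -1/n sum_i ln softmax_i(s i)
   for a score matrix s (s i j = z_i . c_j, resp. c_i . z_j).  Since exp lies
   above its tangent line, ln (sum_j exp (s i j)) dominates the mean of the row
   s i, so each term is at least -1/n sum_i s i i + 1/n^2 sum_(i,j) s i j.  In
   both terms the double sum is sum_(i,j) z_i . c_(y j), which regrouped by class
   is n times the last sum of the right-hand side. *)

Section InfoNCE.
Variable R : realType.

Lemma sum_expR_gt0 (m : nat) (b : 'I_m.+1 -> R) : 0 < \sum_j expR (b j).
Proof.
rewrite (bigD1 ord0) //=; apply: ltr_wpDr; last exact: expR_gt0.
by apply: sumr_ge0 => j _; exact: expR_ge0.
Qed.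

Lemma mean_le_ln_sum_expR (m : nat) (b : 'I_m.+1 -> R) :
  m.+1%:R^-1 * \sum_j b j <= ln (\sum_j expR (b j)).
Proof.
set mu := _ * _.
rewrite -[leLHS]expRK ler_ln ?posrE ?expR_gt0 ?sum_expR_gt0 //.
have tangent j : expR mu * (1 + (b j - mu)) <= expR (b j).
  have -> : expR (b j) = expR mu * expR (b j - mu) by rewrite -expRD addrC subrK.
  by apply: ler_wpM2l; [exact: expR_ge0 | exact: expR_ge1Dx].
apply: le_trans (ler_sum _ (fun j _ => tangent j)).
have centered : \sum_(j < m.+1) (b j - mu) = 0.
  rewrite sumrB sumr_const card_ord /mu -[(_ * _) *+ _]mulr_natr.
  by rewrite mulrAC mulVf ?pnatr_eq0 // mul1r subrr.
rewrite -mulr_sumr big_split /= centered sumr_const card_ord addr0.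
by rewrite ler_peMr ?expR_ge0 // ler1n.
Qed.

Lemma ln_expR_div (a S : R) : 0 < S -> ln (expR a / S) = a - ln S.
Proof. by move=> S_gt0; rewrite ln_div ?posrE ?expR_gt0 // expRK. Qed.

Definition info_nce (n : nat) (s : 'I_n -> 'I_n -> R) : R :=
  - n%:R^-1 * \sum_(i < n) ln (expR (s i i) / \sum_(j < n) expR (s i j)).

Lemma info_nce_ge (n : nat) (s : 'I_n -> 'I_n -> R) :
  - n%:R^-1 * \sum_(i < n) s i i + n%:R^-2 * \sum_(i < n) \sum_(j < n) s i j
    <= info_nce s.
Proof.
case: n s => [|m] s; first by rewrite /info_nce !big_ord0 !mulr0 addr0.
rewrite /info_nce (eq_bigr _ (fun i _ => ln_expR_div (s i i) (sum_expR_gt0 (s i)))).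
rewrite -exprVn expr2 sumrB mulrBr lerD2l mulNr opprK -mulrA.
apply: ler_wpM2l; first by rewrite invr_ge0 ler0n.
by rewrite mulr_sumr; apply: ler_sum => i _; exact: mean_le_ln_sum_expR.
Qed.

End InfoNCE.

Lemma dotvC (R : realType) (d : nat) (u v : 'rV[R]_d) : dotv u v = dotv v u.
Proof. by apply: eq_bigr => l _; rewrite mulrC. Qed.

Lemma L_SCE_info_nce (R : realType) (d n : nat) (z c : 'I_n -> 'rV[R]_d) :
  L_SCE z c = info_nce (fun i j => dotv (z i) (c j))
            + info_nce (fun i j => dotv (c i) (z j)).
Proof. by rewrite /L_SCE /info_nce !mulNr. Qed.

Lemma sum_dotv_class (R : realType) (d n NC : nat) (y : 'I_n -> 'I_NC)
    (c : 'I_NC -> 'rV[R]_d) (u : 'rV[R]_d) :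
  \sum_(j < n) dotv u (c (y j)) = \sum_(k < NC) (class_card y k)%:R * dotv u (c k).
Proof.
rewrite (partition_big y xpredT) //=; apply: eq_bigr => k _.
rewrite (eq_bigr (fun=> dotv u (c k))); last by move=> j /eqP ->.
rewrite sumr_const mulr_natl /class_card; congr (_ *+ _).
by apply: eq_card => j; rewrite inE.
Qed.

Theorem theorem3 (R : realType) (d n NC : nat)
  (z : 'I_n -> 'rV[R]_d) (y : 'I_n -> 'I_NC) (c : 'I_NC -> 'rV[R]_d)
  (hz : forall i, sqnorm (z i) = 1) (hc : forall k, sqnorm (c k) = 1) :
  L_SCE z (fun i => c (y i)) >=
    - (2 / n%:R) * \sum_(i < n) dotv (z i) (c (y i))
    + (2 / n%:R) * \sum_(i < n) \sum_(k < NC)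
        ((class_card y k)%:R / n%:R) * dotv (z i) (c k).
Proof.
set S := \sum_(i < n) \sum_(j < n) dotv (z i) (c (y j)).
have zc_ge := info_nce_ge (fun i j => dotv (z i) (c (y j))).
have cz_ge := info_nce_ge (fun i j => dotv (c (y i)) (z j)).
have diagC : \sum_(i < n) dotv (c (y i)) (z i) = \sum_(i < n) dotv (z i) (c (y i)).
  by apply: eq_bigr => i _; rewrite dotvC.
have offdiagC : \sum_(i < n) \sum_(j < n) dotv (c (y i)) (z j) = S.
  by rewrite exchange_big; apply: eq_bigr => i _; apply: eq_bigr => j _; rewrite dotvC.
have by_class : \sum_(i < n) \sum_(k < NC)
    ((class_card y k)%:R / n%:R) * dotv (z i) (c k) = n%:R^-1 * S.
  rewrite /S mulr_sumr; apply: eq_bigr => i _.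
  rewrite sum_dotv_class mulr_sumr; apply: eq_bigr => k _.
  by rewrite mulrCA mulrA.
rewrite /= diagC offdiagC -/S -exprVn expr2 in zc_ge cz_ge.
by rewrite /Order.ge /= L_SCE_info_nce by_class; lra.
Qed.
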